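(* For either choice $\zeta\in\{q,-q^3\}$, the function $\mathcal{F}(\lambda_1,\dots,\lambda_{L-1}\mid v_1,v_2)=\langle\bar0|\mathcal{E}(\lambda_{L-1})\cdots\mathcal{E}(\lambda_1)\mathcal{B}(v_2)\mathcal{B}(v_1)|0\rangle$ can be written as $\mathcal{F}(\lambda_1,\dots,\lambda_{L-1}\mid v_1,v_2)=\omega(y_1)\,\mathcal{H}(\lambda_1,\dots,\lambda_{L-1}\mid v_1,v_2)$ with $y_1=e^{2v_1}$, $\omega(y)=\prod_{j=1}^L(y-e^{2\mu_j}\zeta)$, where $\mathcal{H}$ is a polynomial of degree $L-1$ in $y_1$ and has the same dependence on the other variables as $\mathcal{F}$ (i.e. it is a polynomial of degree $2L-1$ in each $x_i=e^{2\lambda_i}$ and in $y_2=e^{2v_2}$).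
   Context: Let $q\in\mathbb{C}\setminus\{0\}$ (with a fixed choice of $q^{1/2}$) and $\zeta\in\{q,-q^3\}$ ($\zeta=q$: Fateev–Zamolodchikov model; $\zeta=-q^3$: Izergin–Korepin model). For $\lambda\in\mathbb{C}$ put $x=e^{2\lambda}$ and define $a(\lambda)=(x-\zeta)(x-q^2)$, $b(\lambda)=q(x-1)(x-\zeta)$, $c(\lambda)=(1-q^2)(x-\zeta)$, $\bar c(\lambda)=x(1-q^2)(x-\zeta)$, and for $\alpha,\beta\in\{1,2,3\}$, with $\beta'=4-\beta$: $d_{\alpha,\beta}(\lambda)=q(x-1)(x-\zeta)+x(q^2-1)(\zeta-1)$ if $\alpha=\beta=2$; $d_{\alpha,\beta}(\lambda)=(x-1)[(x-\zeta)+x(q^2-1)]$ if $\alpha=\beta\neq 2$; $d_{\alpha,\beta}(\lambda)=(q^2-1)[\zeta(x-1)q^{(\alpha-\beta)/2}-\delta_{\alpha,\beta'}(x-\zeta)]$ if $\alpha<\beta$; $d_{\alpha,\beta}(\lambda)=x(q^2-1)[(x-1)q^{(\alpha-\beta)/2}-\delta_{\alpha,\beta'}(x-\zeta)]$ if $\alpha>\beta$. Let $e_1,e_2,e_3$ be the standard basis of $\mathbb{C}^3$ and $E_{\alpha,\beta}$ the unit matrices. Define $\mathcal{R}(\lambda)\in\mathrm{End}(\mathbb{C}^3\otimes\mathbb{C}^3)$ as the $9\times 9$ matrix in the ordered basis $e_1\otimes e_1,e_1\otimes e_2,e_1\otimes e_3,e_2\otimes e_1,e_2\otimes e_2,e_2\otimes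 e_3,e_3\otimes e_1,e_3\otimes e_2,e_3\otimes e_3$ (indices $1,\dots,9$) whose only nonzero entries (row, column) are: $(1,1)=a$; $(2,2)=b$, $(2,4)=c$; $(3,3)=d_{1,1}$, $(3,5)=d_{1,2}$, $(3,7)=d_{1,3}$; $(4,2)=\bar c$, $(4,4)=b$; $(5,3)=d_{2,1}$, $(5,5)=d_{2,2}$, $(5,7)=d_{2,3}$; $(6,6)=b$, $(6,8)=c$; $(7,3)=d_{3,1}$, $(7,5)=d_{3,2}$, $(7,7)=d_{3,3}$; $(8,6)=\bar c$, $(8,8)=b$; $(9,9)=a$ (all evaluated at $\lambda$). Fix $L\ge1$ and inhomogeneities $\mu_1,\dots,\mu_L\in\mathbb{C}$. With $V_a=V_1=\dots=V_L=\mathbb{C}^3$, let $\mathcal{T}(\lambda)=\mathcal{R}_{a1}(\lambda-\mu_1)\cdots\mathcal{R}_{aL}(\lambda-\mu_L)$, where $\mathcal{R}_{aj}$ acts as $\mathcal{R}$ on $V_a\otimes V_j$. Write $\mathcal{T}(\lambda)=\sum_{\alpha,\beta}E_{\alpha,\beta}\otimes\mathcal{T}_\alpha^\beta(\lambda)$ and set $\mathcal{B}(\lambda)=\mathcal{T}_1^2(\lambda)$, $\mathcal{E}(\lambda)=\mathcal{T}_1^3(\lambda)$, operators on $V_1\otimes\cdots\otimes V_L$. Let $|0\rangle=e_1^{\otimes L}$ and let $\langle\bar0|$ be the dual vector of $e_3^{\otimes L}$. *)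

From mathcomp Require Import all_boot all_algebra.
From mathcomp Require Import Rstruct complex.
From mathcomp Require Import mpoly.

Set Implicit Arguments.
Unset Strict Implicit.
Unset Printing Implicit Defensive.

Import GRing.Theory.
Local Open Scope ring_scope.

Definition CC : numClosedFieldType := complex Rdefinitions.R.

Section Model.

(* q, a fixed square root s = q^{1/2} of q, and zeta (= q or -q^3). *)
Variables (q s zeta : CC).

(* Entries of the R-matrix, written as functions of x = e^{2 lambda}. *)
Definition Ra (x : CC) : CC := (x - zeta) * (x - q ^+ 2).
Definition Rb (x : CC) : CC := q * (x - 1) * (x - zeta).
Definition Rc (x : CC) : CC := (1 - q ^+ 2) * (x - zeta).
Definition Rcbar (x : CC) : CC := x * (1 - q ^+ 2) * (x - zeta).

(* d_{al,be}(x) for al, be in {1,2,3}; q^{(al-be)/2} = s^(al-be). *)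
Definition Rd (al be : nat) (x : CC) : CC :=
  let delta : CC := if (al + be == 4)%N then 1 else 0 in
  if (al == be) then
    (if al == 2 then q * (x - 1) * (x - zeta) + x * (q ^+ 2 - 1) * (zeta - 1)
     else (x - 1) * ((x - zeta) + x * (q ^+ 2 - 1)))
  else if (al < be)%N then
    (q ^+ 2 - 1) * (zeta * (x - 1) * s ^- (be - al) - delta * (x - zeta))
  else
    x * (q ^+ 2 - 1) * ((x - 1) * s ^+ (al - be) - delta * (x - zeta)).

(* The 9x9 matrix R(lambda), entry (i, j) with 1-based indices i, j in 1..9
   (basis e_1(x)e_1, e_1(x)e_2, ..., e_3(x)e_3). *)
Definition Rmat (x : CC) (i j : nat) : CC :=
  match i, j with
  | 1, 1 => Ra x
  | 2, 2 => Rb x | 2, 4 => Rc x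
  | 3, 3 => Rd 1 1 x | 3, 5 => Rd 1 2 x | 3, 7 => Rd 1 3 x
  | 4, 2 => Rcbar x | 4, 4 => Rb x
  | 5, 3 => Rd 2 1 x | 5, 5 => Rd 2 2 x | 5, 7 => Rd 2 3 x
  | 6, 6 => Rb x | 6, 8 => Rc x
  | 7, 3 => Rd 3 1 x | 7, 5 => Rd 3 2 x | 7, 7 => Rd 3 3 x
  | 8, 6 => Rcbar x | 8, 8 => Rb x
  | 9, 9 => Ra x
  | _, _ => 0
  end.

(* Matrix element <e_a (x) e_s | R | e_b (x) e_t>, with 0-based a,s,b,t : 'I_3
   (e_{a+1} etc.); the row index of e_a (x) e_s is 3a + s + 1. *)
Definition Rent (x : CC) (a s b t : 'I_3) : CC :=
  Rmat x (3 * a + s + 1) (3 * b + t + 1).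

Variable L : nat.
(* w j = e^{2 mu_{j+1}} (the inhomogeneities), j : 'I_L. *)
Variable w : 'I_L -> CC.

(* Basis configurations of V_1 (x) ... (x) V_L:  e_{c 0 + 1} (x) ... *)
Definition cfg := {ffun 'I_L -> 'I_3}.

(* Operators on V_1 (x) ... (x) V_L, as matrices indexed by configurations:
   A sigma tau = <e_sigma | A | e_tau>. *)
Definition op := cfg -> cfg -> CC.

Definition opmul (A B : op) : op := fun sg tau => \sum_(rho : cfg) A sg rho * B rho tau.
Definition op1 : op := fun sg tau => if sg == tau then 1 else 0.

(* Entry T_al^be(lambda) of the monodromy matrix
   T(lambda) = R_{a1}(lambda - mu_1) ... R_{aL}(lambda - mu_L), with x = e^{2 lambda};
   R(lambda - mu_j) is evaluated at e^{2(lambda - mu_j)} = x / w_j. *)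
Definition Tmon (al be : 'I_3) (x : CC) : op := fun sg tau =>
  \sum_(p : {ffun 'I_L.+1 -> 'I_3} | (p ord0 == al) && (p ord_max == be))
     \prod_(j : 'I_L) Rent (x / w j) (p (widen_ord (leqnSn L) j)) (sg j)
                                      (p (lift ord0 j)) (tau j).

Definition i1 : 'I_3 := @Ordinal 3 0 isT.
Definition i2 : 'I_3 := @Ordinal 3 1 isT.
Definition i3 : 'I_3 := @Ordinal 3 2 isT.

(* B = T_1^2, E = T_1^3. *)
Definition Bop (x : CC) : op := Tmon i1 i2 x.
Definition Eop (x : CC) : op := Tmon i1 i3 x.

(* |0> = e_1^{(x) L},  <0bar| = dual of e_3^{(x) L}. *)
Definition vac : cfg := [ffun => i1].
Definition dvac : cfg := [ffun => i3].

(* F(lambda_1..lambda_{L-1} | v_1, v_2)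
     = <0bar| E(lambda_{L-1}) ... E(lambda_1) B(v_2) B(v_1) |0>,
   with x i = e^{2 lambda_i} (i = 1..L-1), y1 = e^{2 v_1}, y2 = e^{2 v_2}. *)
Definition Fpf (x : nat -> CC) (y1 y2 : CC) : CC :=
  foldr opmul op1
    ([seq Eop (x i) | i <- rev (iota 1 L.-1)] ++ [:: Bop y2; Bop y1]) dvac vac.

Definition omega (y : CC) : CC := \prod_(j : 'I_L) (y - w j * zeta).

Definition Hvars (x : nat -> CC) (y1 y2 : CC) (k : 'I_L.+1) : CC :=
  if (k < L.-1)%N then x k.+1 else if (k == L.-1 :> nat) then y1 else y2.

End Model.

(* Every entry of R(x) is a polynomial of degree at most 2 in x, and of degree
   at most 1 when the auxiliary index increases.  A path of auxiliary indices
   from 1 to 2 or 3 increases at least once, so the entries of B(x) and E(x)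
   have degree at most 2L - 1 in x.
   On |0> only the column e_1 of each R-matrix matters.  By weight conservation
   the auxiliary index cannot decrease there, so along a contributing path from
   1 to 2 it never reaches 3, and each factor is (x - zeta) times a polynomial
   of degree at most 1 that is constant when the index increases.  Hence
   B(v_1)|0> = prod_j (y_1 e^{-2 mu_j} - zeta) V(y_1)
             = omega(y_1) prod_j e^{-2 mu_j} V(y_1),
   where V has degree at most L - 1 in y_1, and H is obtained from
   <0bar| E ... E B(v_2) V by replacing each spectral parameter with a
   polynomial variable. *)

From mathcomp Require Import all_boot all_algebra.
From mathcomp Require Import Rstruct complex.
From mathcomp Require Import mpoly.
From mathcomp Require Import ring zify.
From Stdlib Require Import FunctionalExtensionality.

Set Implicit Arguments.
Unset Strict Implicit.
Unset Printing Implicit Defensive.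

Import GRing.Theory.
Local Open Scope ring_scope.

Section VarDegree.
Variables (n : nat) (R : nzRingType) (k : 'I_n).
Local Notation MP := {mpoly R[n]}.

Definition vdeg_le (d : nat) (p : MP) : bool := all (fun m : 'X_{1..n} => m k <= d)%N (msupp p).

Lemma vdeg_leP d p : reflect (forall m, m \in msupp p -> m k <= d)%N (vdeg_le d p).
Proof. exact: allP. Qed.

Lemma vdeg_leW d d' p : vdeg_le d p -> (d <= d')%N -> vdeg_le d' p.
Proof. by move=> /vdeg_leP hp le_dd'; apply/vdeg_leP => m /hp /leq_trans; apply. Qed.

Lemma vdeg_le0 d : vdeg_le d 0.
Proof. by rewrite /vdeg_le msupp0. Qed.

Lemma vdeg_leC d c : vdeg_le d c%:MP.
Proof.
apply/vdeg_leP => m; rewrite msuppC; case: eqP => // _.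
by rewrite inE => /eqP ->; rewrite mnm0E.
Qed.

Lemma vdeg_leX i : vdeg_le (i == k) 'X_i.
Proof. by apply/vdeg_leP => m; rewrite msuppX inE => /eqP ->; rewrite mnm1E. Qed.

Lemma vdeg_leD d p q : vdeg_le d p -> vdeg_le d q -> vdeg_le d (p + q).
Proof.
move=> /vdeg_leP hp /vdeg_leP hq; apply/vdeg_leP => m /msuppD_le.
by rewrite mem_cat => /orP [/hp|/hq].
Qed.

Lemma vdeg_leM d1 d2 p q : vdeg_le d1 p -> vdeg_le d2 q -> vdeg_le (d1 + d2) (p * q).
Proof.
move=> /vdeg_leP hp /vdeg_leP hq; apply/vdeg_leP => m.
by move=> /msuppM_le /allpairsP [[m1 m2] /= [/hp h1 /hq h2 ->]]; rewrite mnmDE leq_add.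
Qed.

Lemma vdeg_le_sum (I : Type) (r : seq I) (P : pred I) (F : I -> MP) d :
  (forall i, P i -> vdeg_le d (F i)) -> vdeg_le d (\sum_(i <- r | P i) F i).
Proof.
move=> hF; elim/big_rec: _ => [|i p Pi hp]; first exact: vdeg_le0.
exact: vdeg_leD (hF i Pi) hp.
Qed.

Lemma vdeg_le_prod (I : Type) (r : seq I) (P : pred I) (F : I -> MP) d :
  (forall i, P i -> vdeg_le d (F i)) ->
  vdeg_le (\sum_(i <- r | P i) d) (\prod_(i <- r | P i) F i).
Proof.
move=> hF; elim/big_rec2: _ => [|i e p Pi hp]; first exact: vdeg_leC.
exact: vdeg_leM (hF i Pi) hp.
Qed.

Lemma vdeg_le_horner_rec d (c : seq R) (Y : MP) :
  vdeg_le d Y -> vdeg_le ((size c).-1 * d) (horner_rec (map (@mpolyC n R) c) Y).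
Proof.
move=> hY; elim: c => [|a [|b c] IH] /=; first exact: vdeg_le0.
  by rewrite mul0r add0r; apply: vdeg_leC.
apply: vdeg_leW (vdeg_leD (vdeg_leM IH hY) (vdeg_leC _ a)) _.
by rewrite mulSn addnC.
Qed.

End VarDegree.

Arguments vdeg_leX {n R}.

Lemma meval_horner_rec n (R : comNzRingType) (c : seq R) (Y : {mpoly R[n]}) v :
  (horner_rec (map (@mpolyC n R) c) Y).@[v] = horner_rec c Y.@[v].
Proof. by elim: c => [|a c IH] /=; rewrite ?meval0 // mevalD mevalM mevalC IH. Qed.

Section MatrixVector.
Variables (R : comPzRingType) (T : finType).

Definition mulmv (A : T -> T -> R) (v : T -> R) (i : T) : R := \sum_j A i j * v j.

Lemma eq_foldr_mulmv l v v' : v =1 v' -> foldr mulmv v l =1 foldr mulmv v' l.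
Proof.
move=> eq_v; elim: l => [|A l IH] i //=.
by apply: eq_bigr => j _; rewrite IH.
Qed.

Lemma foldr_mulmvZ l c v i :
  foldr mulmv (fun j => c * v j) l i = c * foldr mulmv v l i.
Proof.
elim: l i => [|A l IH] i //=; rewrite /mulmv mulr_sumr.
by apply: eq_bigr => j _; rewrite IH mulrCA.
Qed.

End MatrixVector.

Arguments mulmv {R T}.

Lemma rmorph_foldr_mulmv (R S : comPzRingType) (T : finType) (f : {rmorphism R -> S})
    l (v : T -> R) i :
  f (foldr mulmv v l i) = foldr mulmv (f \o v) (map (fun A a b => f (A a b)) l) i.
Proof.
elim: l i => [|A l IH] i //=; rewrite rmorph_sum.
by apply: eq_bigr => j _; rewrite rmorphM IH.
Qed.

Lemma vdeg_le_foldr_mulmv n (R : comNzRingType) (T : finType) (k : 'I_n) (s : seq 'I_n)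
    (A : 'I_n -> T -> T -> {mpoly R[n]}) d dv v i :
  uniq s -> (forall j, j \in s -> forall a b, vdeg_le k ((j == k) * d) (A j a b)) ->
  (forall a, vdeg_le k dv (v a)) ->
  vdeg_le k ((k \in s) * d + dv) (foldr mulmv v (map A s) i).
Proof.
elim: s i => [|j s IH] i /=; first by move=> _ _ hv; apply: hv.
move=> /andP[j_notin_s uniq_s] hA hv.
apply: vdeg_le_sum => a _; apply: vdeg_leW (vdeg_leM (hA j (mem_head j s) i a) _) _.
  by apply: IH => // j' j's; apply: hA; rewrite inE j's orbT.
rewrite inE addnA leq_add2r eq_sym; have [<-|_] //= := eqVneq j k.
by rewrite (negbTE j_notin_s) addn0.
Qed.

Lemma foldr_opmul_col L (l : seq (op L)) (sg tau : cfg L) :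
  foldr (@opmul L) (@op1 L) l sg tau = foldr mulmv (fun rho => op1 rho tau) l sg.
Proof. by elim: l sg => [|A l IH] sg //=; apply: eq_bigr => rho _; rewrite IH. Qed.

Lemma mulmv_op1_col L (A : op L) (tau : cfg L) :
  mulmv A (fun rho => op1 rho tau) =1 A^~ tau.
Proof.
move=> sg; rewrite /mulmv (bigD1 tau) //= /op1 eqxx mulr1 big1 ?addr0 //.
by move=> rho /negbTE ->; rewrite mulr0.
Qed.

Lemma exists_ascent (f : nat -> nat) n :
  (f 0 < f n)%N -> exists2 j, (j < n)%N & (f j < f j.+1)%N.
Proof.
elim: n => [|n IH] lt0n; first by rewrite ltnn in lt0n.
have [|le_n] := ltnP (f n) (f n.+1); first by exists n.
by have [j lt_jn asc] := IH (leq_trans lt0n le_n); exists j; first exact: leqW.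
Qed.

Lemma nondecreasing_le_last (f : nat -> nat) n :
  (forall j, j < n -> f j <= f j.+1)%N -> forall j, (j <= n -> f j <= f n)%N.
Proof.
elim: n => [|n IH] mono j; first by rewrite leqn0 => /eqP ->.
rewrite leq_eqVlt => /orP [/eqP -> //| le_jn].
apply: leq_trans (IH _ j le_jn) (mono n _) => // i lt_in.
by apply: mono; apply: leqW.
Qed.

Section Paths.
Variable L : nat.
Implicit Type p : {ffun 'I_L.+1 -> 'I_3}.

Let widen_inord (j : 'I_L) : widen_ord (leqnSn L) j = inord j.
Proof. by apply/val_inj; rewrite /= inordK // leqW. Qed.

Let lift0_inord (j : 'I_L) : lift ord0 j = inord j.+1.
Proof. by apply/val_inj; rewrite /= /bump /= inordK ?ltnS. Qed.

Let path_ends p : p ord0 = p (inord 0) /\ p ord_max = p (inord L).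
Proof. by split; congr (p _); apply/val_inj; rewrite /= inordK. Qed.

Lemma path_ascent p : (p ord0 < p ord_max)%N ->
  exists j : 'I_L, (p (widen_ord (leqnSn L) j) < p (lift ord0 j))%N.
Proof.
have [-> ->] := path_ends p.
case/(exists_ascent (f := fun i => p (inord i))) => j lt_jL asc.
by exists (Ordinal lt_jL); rewrite widen_inord lift0_inord.
Qed.

Lemma path_le_last p :
  (forall j : 'I_L, p (widen_ord (leqnSn L) j) <= p (lift ord0 j))%N ->
  forall j : 'I_L, (p (lift ord0 j) <= p ord_max)%N.
Proof.
move=> mono j; have [_ ->] := path_ends p; rewrite lift0_inord.
apply: (nondecreasing_le_last (f := fun i => p (inord i))) => // i lt_iL.
by have := mono (Ordinal lt_iL); rewrite widen_inord lift0_inord.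
Qed.

End Paths.

Definition vertex_weights (R : Type) (L : nat) :=
  'I_L -> 'I_3 -> 'I_3 -> 'I_3 -> 'I_3 -> R.

Definition monodromy (R : comPzRingType) L (W : vertex_weights R L) (al be : 'I_3)
    (sg tau : cfg L) : R :=
  \sum_(p : {ffun 'I_L.+1 -> 'I_3} | (p ord0 == al) && (p ord_max == be))
     \prod_(j : 'I_L) W j (p (widen_ord (leqnSn L) j)) (sg j) (p (lift ord0 j)) (tau j).

Lemma rmorph_monodromy (R S : comPzRingType) L (f : {rmorphism R -> S})
    (W : vertex_weights R L) al be sg tau :
  f (monodromy W al be sg tau) =
  monodromy (fun j a u b t => f (W j a u b t)) al be sg tau.
Proof. by rewrite rmorph_sum; apply: eq_bigr => p _; rewrite rmorph_prod. Qed.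

Lemma vdeg_le_monodromy n (R : comNzRingType) L (k : 'I_n)
    (W : vertex_weights {mpoly R[n]} L) d1 d2 (al be : 'I_3) sg tau :
  (forall j a u b t, vdeg_le k d2 (W j a u b t)) ->
  (forall j (a u b t : 'I_3), (a < b)%N -> vdeg_le k d1 (W j a u b t)) ->
  (al < be)%N -> vdeg_le k (d1 + L.-1 * d2) (monodromy W al be sg tau).
Proof.
move=> W_le W_asc_le lt_al_be; apply: vdeg_le_sum => p /andP[/eqP p0 /eqP pL].
have [|j asc_j] := @path_ascent L p; first by rewrite p0 pL.
rewrite (bigD1 j) //=; apply: vdeg_leM; first exact: W_asc_le.
have -> : (L.-1 * d2 = \sum_(i < L | i != j) d2)%N.
  by rewrite sum_nat_const cardC1 card_ord mulnC.
exact: vdeg_le_prod.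
Qed.

Section RCoefficients.
Variables (q s zeta : CC).

Definition Ra_coef : seq CC := [:: zeta * q ^+ 2; - (zeta + q ^+ 2); 1].
Definition Rb_coef : seq CC := [:: q * zeta; - (q * (1 + zeta)); q].
Definition Rc_coef : seq CC := [:: - ((1 - q ^+ 2) * zeta); 1 - q ^+ 2].
Definition Rcbar_coef : seq CC := [:: 0; - ((1 - q ^+ 2) * zeta); 1 - q ^+ 2].

Definition Rd_coef (al be : nat) : seq CC :=
  let delta : CC := if (al + be == 4)%N then 1 else 0 in
  if al == be then
    if al == 2 then [:: q * zeta; (q ^+ 2 - 1) * (zeta - 1) - q * (1 + zeta); q]
    else [:: zeta; - (q ^+ 2 + zeta); q ^+ 2]
  else if (al < be)%N then
    [:: (q ^+ 2 - 1) * (delta * zeta - zeta * s ^- (be - al));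
        (q ^+ 2 - 1) * (zeta * s ^- (be - al) - delta)]
  else
    [:: 0; (q ^+ 2 - 1) * (delta * zeta - s ^+ (al - be));
        (q ^+ 2 - 1) * (s ^+ (al - be) - delta)].

Definition Rmat_coef (i j : nat) : seq CC :=
  match i, j with
  | 1, 1 => Ra_coef
  | 2, 2 => Rb_coef | 2, 4 => Rc_coef
  | 3, 3 => Rd_coef 1 1 | 3, 5 => Rd_coef 1 2 | 3, 7 => Rd_coef 1 3
  | 4, 2 => Rcbar_coef | 4, 4 => Rb_coef
  | 5, 3 => Rd_coef 2 1 | 5, 5 => Rd_coef 2 2 | 5, 7 => Rd_coef 2 3
  | 6, 6 => Rb_coef | 6, 8 => Rc_coef
  | 7, 3 => Rd_coef 3 1 | 7, 5 => Rd_coef 3 2 | 7, 7 => Rd_coef 3 3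
  | 8, 6 => Rcbar_coef | 8, 8 => Rb_coef
  | 9, 9 => Ra_coef
  | _, _ => [::]
  end.

Lemma Rd_horner al be x : Rd q s zeta al be x = horner_rec (Rd_coef al be) x.
Proof.
rewrite /Rd /Rd_coef /=.
by case: (al + be == 4)%N; case: (al == be); case: (al == 2); case: (al < be)%N; rewrite /=; ring.
Qed.

Lemma Rmat_horner x i j : Rmat q s zeta x i j = horner_rec (Rmat_coef i j) x.
Proof.
have [Ra_h Rb_h Rc_h Rcbar_h] :
    [/\ Ra q zeta x = horner_rec Ra_coef x, Rb q zeta x = horner_rec Rb_coef x,
        Rc q zeta x = horner_rec Rc_coef x & Rcbar q zeta x = horner_rec Rcbar_coef x].
  by split; rewrite /Ra /Rb /Rc /Rcbar /=; ring.
by do 10?[case: i => [|i]]; do 10?[case: j => [|j]]; rewrite /= ?Rd_horner.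
Qed.

Definition Rent_coef (a u b t : 'I_3) : seq CC :=
  Rmat_coef (3 * a + u + 1) (3 * b + t + 1).

Lemma Rent_horner x a u b t :
  Rent q s zeta x a u b t = horner_rec (Rent_coef a u b t) x.
Proof. exact: Rmat_horner. Qed.

Lemma size_Rent_coef a u b t : (size (Rent_coef a u b t) <= 3)%N.
Proof.
by case: a u b t => [[|[|[|?]]] ?] [[|[|[|?]]] ?] [[|[|[|?]]] ?] [[|[|[|?]]] ?].
Qed.

Lemma size_Rent_coef_ascent (a u b t : 'I_3) :
  (a < b)%N -> (size (Rent_coef a u b t) <= 2)%N.
Proof.
by case: a u b t => [[|[|[|?]]] ?] [[|[|[|?]]] ?] [[|[|[|?]]] ?] [[|[|[|?]]] ?].
Qed.

Lemma Rent_conservation x (a u b t : 'I_3) :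
  (a + u != b + t)%N -> Rent q s zeta x a u b t = 0.
Proof.
by case: a u b t => [[|[|[|?]]] ?] [[|[|[|?]]] ?] [[|[|[|?]]] ?] [[|[|[|?]]] ?].
Qed.

(* The last argument is unused: it gives Rvac_coef the shape of Rent_coef. *)
Definition Rvac_coef (a u b _ : 'I_3) : seq CC :=
  match val a, val u, val b with
  | 0, 0, 0 => [:: - q ^+ 2; 1]
  | 0, 1, 1 => [:: 1 - q ^+ 2]
  | 1, 0, 1 => [:: - q; q]
  | _, _, _ => [::]
  end.

Lemma Rent_vac x a u b : b != i3 ->
  Rent q s zeta x a u b i1 = (x - zeta) * horner_rec (Rvac_coef a u b i1) x.
Proof.
case: a u b => [[|[|[|?]]] ?] [[|[|[|?]]] ?] [[|[|[|?]]] ?] //= _;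
  rewrite /Rent /Rmat /Ra /Rb /Rc /Rcbar /Rd /=; ring.
Qed.

Lemma size_Rvac_coef a u b t : (size (Rvac_coef a u b t) <= 2)%N.
Proof. by case: a u b => [[|[|[|?]]] ?] [[|[|[|?]]] ?] [[|[|[|?]]] ?]. Qed.

Lemma size_Rvac_coef_ascent (a u b t : 'I_3) :
  (a < b)%N -> (size (Rvac_coef a u b t) <= 1)%N.
Proof. by case: a u b => [[|[|[|?]]] ?] [[|[|[|?]]] ?] [[|[|[|?]]] ?]. Qed.

Lemma Rvac_coef_descent (a u b t : 'I_3) : (b < a)%N -> Rvac_coef a u b t = [::].
Proof. by case: a u b => [[|[|[|?]]] ?] [[|[|[|?]]] ?] [[|[|[|?]]] ?]. Qed.

End RCoefficients.

Section Factorization.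
Variables (q s zeta : CC) (L : nat) (w : 'I_L -> CC).
Hypothesis L_gt0 : (0 < L)%N.
Hypothesis w_neq0 : forall j, w j != 0.

Definition horner_weights (C : 'I_3 -> 'I_3 -> 'I_3 -> 'I_3 -> seq CC) (x : CC) :
  vertex_weights CC L := fun j a u b t => horner_rec (C a u b t) (x / w j).

Definition mpoly_weights n (C : 'I_3 -> 'I_3 -> 'I_3 -> 'I_3 -> seq CC)
    (X : {mpoly CC[n]}) : vertex_weights {mpoly CC[n]} L :=
  fun j a u b t => horner_rec (map (@mpolyC n CC) (C a u b t)) (X * (w j)^-1%:MP).

Lemma meval_monodromy_weights n C (X : {mpoly CC[n]}) v al be sg tau :
  (monodromy (mpoly_weights C X) al be sg tau).@[v] =
  monodromy (horner_weights C X.@[v]) al be sg tau.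
Proof.
rewrite rmorph_monodromy; apply: eq_bigr => p _; apply: eq_bigr => j _.
by rewrite /= meval_horner_rec mevalM mevalC.
Qed.

Lemma vdeg_le_monodromy_weights n (k : 'I_n) C (X : {mpoly CC[n]}) m1 m2 d
    (al be : 'I_3) sg tau :
  (forall a u b t, size (C a u b t) <= m2.+1)%N ->
  (forall (a u b t : 'I_3), a < b -> size (C a u b t) <= m1.+1)%N ->
  (al < be)%N -> vdeg_le k d X ->
  vdeg_le k ((m1 + L.-1 * m2) * d) (monodromy (mpoly_weights C X) al be sg tau).
Proof.
move=> size_C size_C_ascent lt_al_be X_le.
have Xw_le j : vdeg_le k d (X * (w j)^-1%:MP).
  by rewrite -[d]addn0; apply: vdeg_leM X_le _; apply: vdeg_leC.
rewrite mulnDl -mulnA; apply: vdeg_le_monodromy => // [j a u b t|j a u b t asc];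
  apply: vdeg_leW (vdeg_le_horner_rec _ (Xw_le j)) _;
  by rewrite leq_mul2r -subn1 leq_subLR add1n ?size_C ?size_C_ascent ?orbT.
Qed.

Lemma Tmon_horner al be x :
  Tmon q s zeta w al be x =2 monodromy (horner_weights (Rent_coef q s zeta) x) al be.
Proof. by move=> sg tau; apply: eq_bigr => p _; apply: eq_bigr => j _; apply: Rent_horner. Qed.

Lemma Bop_vac y rho :
  Bop q s zeta w y rho (vac L) =
  (\prod_j (y / w j - zeta)) * monodromy (horner_weights (Rvac_coef q) y) i1 i2 rho (vac L).
Proof.
rewrite /Bop /Tmon mulr_sumr; apply: eq_bigr => p /andP[/eqP p0 /eqP pL].
have [/forallP mono|] :=
  boolP [forall j : 'I_L, p (widen_ord (leqnSn L) j) <= p (lift ord0 j)]%N.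
  have p_neq3 j : p (lift ord0 j) != i3.
    by have := path_le_last mono j; rewrite pL; apply: contraTneq => ->.
  rewrite -big_split; apply: eq_bigr => j _; rewrite ffunE.
  exact: Rent_vac.
rewrite negb_forall => /existsP [j]; rewrite -ltnNge => descent.
rewrite (bigD1 j) // [X in _ = _ * X](bigD1 j) //= ffunE.
rewrite Rent_conservation; last by rewrite /i1 /= addn0 neq_ltn (ltn_addr _ descent) orbT.
by rewrite /horner_weights Rvac_coef_descent // !mul0r mulr0.
Qed.

Lemma prod_omega y :
  \prod_j (y / w j - zeta) = omega zeta w y * \prod_j (w j)^-1.
Proof.
rewrite /omega -big_split; apply: eq_bigr => j _ /=.
by rewrite mulrBl [w j * zeta]mulrC -mulrA divff // mulr1.
Qed.

Local Notation MP := {mpoly CC[L.+1]}.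

(* The variables of E(x_{L-1}), ..., E(x_1), B(v_2) in the order of the product
   (see Hvars); the remaining one, var_y1, is carried by vacuum_poly. *)
Definition vars : seq 'I_L.+1 := [seq inord i | i <- rev (iota 0 L.-1) ++ [:: L]].
Definition var_y1 : 'I_L.+1 := inord L.-1.

Definition monodromy_poly (i : 'I_L.+1) : cfg L -> cfg L -> MP :=
  monodromy (mpoly_weights (Rent_coef q s zeta) 'X_i) i1 (if i == ord_max then i2 else i3).

Definition vacuum_poly (rho : cfg L) : MP :=
  monodromy (mpoly_weights (Rvac_coef q) 'X_var_y1) i1 i2 rho (vac L).

Definition Hpoly : MP :=
  (\prod_j (w j)^-1)%:MP * foldr mulmv vacuum_poly (map monodromy_poly vars) (dvac L).

Lemma val_vars : map val vars = rev (iota 0 L.-1) ++ [:: L].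
Proof.
rewrite -map_comp map_id_in // => i; rewrite mem_cat mem_rev mem_iota inE /= => range_i.
by rewrite inordK //; lia.
Qed.

Lemma uniq_vars : uniq vars.
Proof.
rewrite -(map_inj_uniq val_inj) val_vars cat_uniq rev_uniq iota_uniq /= andbT.
by rewrite orbF mem_rev mem_iota; lia.
Qed.

Lemma var_y1_notin_vars : var_y1 \notin vars.
Proof.
rewrite -(mem_map val_inj) val_vars /= inordK; last by rewrite ltnS leq_pred.
by rewrite mem_cat mem_rev mem_iota inE; lia.
Qed.

Lemma vdeg_le_Hpoly k : vdeg_le k (if k == L.-1 :> nat then L.-1 else (2 * L).-1) Hpoly.
Proof.
have E_le i a b : vdeg_le k ((i == k) * (2 * L).-1) (monodromy_poly i a b).
  have lt_be : (i1 < (if i == ord_max then i2 else i3))%N by case: (i == ord_max).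
  apply: vdeg_leW (vdeg_le_monodromy_weights a b (size_Rent_coef q s zeta)
                     (@size_Rent_coef_ascent q s zeta) lt_be (vdeg_leX k i)) _.
  by case: (i == k) => /=; lia.
have V_le rho : vdeg_le k ((var_y1 == k) * L.-1) (vacuum_poly rho).
  have := vdeg_le_monodromy_weights rho (vac L) (@size_Rvac_coef q)
            (@size_Rvac_coef_ascent q) (isT : i1 < i2)%N (vdeg_leX k var_y1).
  by move/vdeg_leW; apply; rewrite add0n muln1 mulnC.
rewrite /Hpoly -[X in vdeg_le k X]add0n; apply: vdeg_leM; first exact: vdeg_leC.
have := vdeg_le_foldr_mulmv (dvac L) uniq_vars (fun i _ => E_le i) V_le.
move/vdeg_leW; apply.
have val_y1 : var_y1 = L.-1 :> nat by rewrite /= inordK // ltnS leq_pred.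
have [<-|k_ny1] := eqVneq var_y1 k.
  by rewrite (negbTE var_y1_notin_vars) ifT ?mul0n ?mul1n //; apply/eqP.
have -> : (k == L.-1 :> nat) = false.
  by apply/negbTE; apply: contra_neq k_ny1 => k_eq; apply/val_inj; rewrite /= val_y1 k_eq.
by case: (k \in vars) => /=; lia.
Qed.

Lemma meval_monodromy_polys x y1 y2 :
  map (fun A a b => (A a b).@[Hvars x y1 y2]) (map monodromy_poly vars) =
  [seq Eop q s zeta w (x i) | i <- rev (iota 1 L.-1)] ++ [:: Bop q s zeta w y2].
Proof.
rewrite /vars !map_cat -!map_comp; congr (_ ++ [:: _]).
  rewrite (iotaDl 1 0) -map_rev -map_comp; apply/eq_in_map => i.
  rewrite mem_rev mem_iota add0n => /andP[_ lt_i] /=.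
  do 2!apply: functional_extensionality => ?.
  rewrite /monodromy_poly ifF; last by apply/eqP => /(congr1 val); rewrite /= inordK; lia.
  rewrite meval_monodromy_weights mevalXU /Hvars inordK; last by lia.
  by rewrite lt_i /Eop Tmon_horner add1n.
do 2!apply: functional_extensionality => ? /=.
rewrite /monodromy_poly ifT; last by apply/eqP/val_inj; rewrite /= inordK.
rewrite meval_monodromy_weights mevalXU /Hvars inordK //.
by rewrite ltnNge leq_pred /= gtn_eqF ?ltn_predL // /Bop Tmon_horner.
Qed.

Lemma meval_vacuum_poly x y1 y2 rho :
  (vacuum_poly rho).@[Hvars x y1 y2] =
  monodromy (horner_weights (Rvac_coef q) y1) i1 i2 rho (vac L).
Proof.
rewrite meval_monodromy_weights mevalXU /Hvars /var_y1 inordK; last by lia.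
by rewrite ltnn eqxx.
Qed.

Lemma Fpf_factor x y1 y2 :
  Fpf q s zeta w x y1 y2 = omega zeta w y1 * Hpoly.@[Hvars x y1 y2].
Proof.
rewrite /Hpoly mevalM mevalC rmorph_foldr_mulmv meval_monodromy_polys.
rewrite mulrA -prod_omega // -foldr_mulmvZ /Fpf foldr_opmul_col.
rewrite -cat_rcons foldr_cat cats1; apply: eq_foldr_mulmv => rho /=.
by rewrite mulmv_op1_col Bop_vac meval_vacuum_poly.
Qed.

End Factorization.

Theorem corollary2p4 (q s zeta : CC) (L : nat) (w : 'I_L -> CC) :
  q != 0 -> s ^+ 2 = q -> (zeta = q \/ zeta = - q ^+ 3) ->
  (1 <= L)%N -> (forall j, w j != 0) ->
  exists H : {mpoly CC[L.+1]},
    (forall m, m \in msupp H ->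
       forall k : 'I_L.+1,
         (m k <= (if k == L.-1 :> nat then L.-1 else (2 * L).-1))%N) /\
    (forall (x : nat -> CC) (y1 y2 : CC),
       (forall i, (1 <= i <= L.-1)%N -> x i != 0) -> y1 != 0 -> y2 != 0 ->
       Fpf q s zeta w x y1 y2 = omega zeta w y1 * H.@[Hvars x y1 y2]).
Proof.
move=> _ _ _ L_gt0 w_neq0; exists (Hpoly q s zeta w); split.
  by move=> m m_supp k; move/vdeg_leP: (vdeg_le_Hpoly q s zeta w L_gt0 k); apply.
by move=> x y1 y2 _ _ _; apply: Fpf_factor.
Qed.
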